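(* Let $k\ge1$ be an integer and $\alpha>\beta>0$. Then $$ \Big[-qs-\tfrac23\sqrt{(1-q^2)(1-s^2)},\,-qs\Big]\subset\mathcal J=(\gamma_{-1},\gamma_1). $$
   Context: Put $\eta=\alpha-\beta$, $\sigma=\alpha+\beta$, $r=2k+\alpha+\beta+1$, $\rho=r-1$, $q=\eta/r$, $s=\sigma/r$, and $\gamma_j=\frac{j\sqrt{(\rho^2-\eta^2)(\rho^2-\sigma^2)}-\eta\sigma}{\rho^2}$ for $j=\pm1$. *)

From Stdlib Require Import Reals.
Open Scope R_scope.

Definition eta_ (a b : R) : R := a - b.
Definition sigma_ (a b : R) : R := a + b.
Definition r_ (k : nat) (a b : R) : R := 2 * INR k + a + b + 1.
Definition rho_ (k : nat) (a b : R) : R := r_ k a b - 1.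
Definition q_ (k : nat) (a b : R) : R := eta_ a b / r_ k a b.
Definition s_ (k : nat) (a b : R) : R := sigma_ a b / r_ k a b.
(* gamma_j for j = +1 / -1, here j : R with j = 1 or j = -1 *)
Definition gamma_ (j : R) (k : nat) (a b : R) : R :=
  let rho := rho_ k a b in
  let et := eta_ a b in
  let si := sigma_ a b in
  (j * sqrt ((rho^2 - et^2) * (rho^2 - si^2)) - et * si) / rho^2.

(* Here [r = ρ + 1], so [q s = η σ / r^2],
   [sqrt ((1 - q^2) (1 - s^2)) = radical η σ r / r^2] and
   [γ_j = (j radical η σ ρ - η σ) / ρ^2].  As [0 < η < σ] and [ρ >= σ + 2],
   clearing denominators turns the claim into [η σ (2ρ + 1) < r^2 radical η σ ρ]
   and [2 ρ^2 radical η σ r < 3 r^2 radical η σ ρ + 3 η σ (2ρ + 1)]; the latter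
   follows by squaring, via [ρ^2 (r^2 - t^2) = r^2 (ρ^2 - t^2) + t^2 (2ρ + 1)]. *)

From Stdlib Require Import Reals Lra Psatz.
Open Scope R_scope.

Definition radical (e s t : R) : R := sqrt ((t ^ 2 - e ^ 2) * (t ^ 2 - s ^ 2)).

Lemma sqrt_one_sub_sqr_div_prod (e s r : R) : 0 < r ->
  sqrt ((1 - (e / r) ^ 2) * (1 - (s / r) ^ 2)) = radical e s r / r ^ 2.
Proof.
  intros Hr.
  assert (Hr4 : 0 < r ^ 4) by (apply pow_lt; exact Hr).
  replace ((1 - (e / r) ^ 2) * (1 - (s / r) ^ 2))
    with ((r ^ 2 - e ^ 2) * (r ^ 2 - s ^ 2) / (r ^ 2) ^ 2) by (field; lra).
  rewrite sqrt_div_alt by nra.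
  rewrite sqrt_pow2 by nra.
  reflexivity.
Qed.

Section Radical.

Variables e s : R.
Hypothesis e_pos : 0 < e.
Hypothesis e_lt_s : e < s.

Lemma radical_sqr (t : R) : s <= t -> radical e s t ^ 2 = (t ^ 2 - e ^ 2) * (t ^ 2 - s ^ 2).
Proof.
  intros Hst; unfold radical.
  apply pow2_sqrt, Rmult_le_pos; nra.
Qed.

Lemma radical_ge_sub_sqr (t : R) : s <= t -> t ^ 2 - s ^ 2 <= radical e s t.
Proof.
  intros Hst.
  assert (Hsq := radical_sqr t Hst).
  assert (Hnn : 0 <= radical e s t) by apply sqrt_pos.
  assert (HB : 0 <= t ^ 2 - s ^ 2) by nra.
  assert (HAB : t ^ 2 - s ^ 2 <= t ^ 2 - e ^ 2) by nra.
  nra.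
Qed.

Variable p : R.
Hypothesis s_add2_le_p : s + 2 <= p.

Lemma cross_lt_radical : e * s * (2 * p + 1) < (p + 1) ^ 2 * radical e s p.
Proof.
  assert (HBS := radical_ge_sub_sqr p ltac:(lra)).
  assert (Hr2 : 0 < (p + 1) ^ 2) by nra.
  assert (HB : 2 * (p + s) <= p ^ 2 - s ^ 2).
  { assert (0 <= (p - s - 2) * (p + s)) by (apply Rmult_le_pos; lra). nra. }
  assert (Hes : e * s * (2 * p + 1) < s ^ 2 * (2 * p + 1)).
  { assert (0 < (s - e) * s * (2 * p + 1)) by (repeat apply Rmult_lt_0_compat; lra). nra. }
  assert (Hsr : s ^ 2 * (2 * p + 1) < (p + 1) ^ 2 * (2 * (p + s))).
  { assert (0 < 2 * p * ((p + 1) ^ 2 - s ^ 2)) by (apply Rmult_lt_0_compat; nra).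
    assert (0 < s * (2 * (p + 1) ^ 2 - s)) by (apply Rmult_lt_0_compat; nra).
    nra. }
  assert ((p + 1) ^ 2 * (2 * (p + s)) <= (p + 1) ^ 2 * radical e s p)
    by (apply Rmult_le_compat_l; lra).
  lra.
Qed.

Lemma radical_succ_lt :
  2 * p ^ 2 * radical e s (p + 1)
    < 3 * (p + 1) ^ 2 * radical e s p + 3 * e * s * (2 * p + 1).
Proof.
  set (r := p + 1); set (c := 2 * p + 1).
  set (A := p ^ 2 - e ^ 2); set (B := p ^ 2 - s ^ 2).
  set (S := radical e s p); set (U := radical e s r).
  assert (HS : S ^ 2 = A * B) by (apply radical_sqr; lra).
  assert (HU : U ^ 2 = (r ^ 2 - e ^ 2) * (r ^ 2 - s ^ 2)) by (apply radical_sqr; unfold r; lra).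
  assert (HBS : B <= S) by (apply radical_ge_sub_sqr; lra).
  assert (HS0 : 0 <= S) by apply sqrt_pos.
  assert (HU0 : 0 <= U) by apply sqrt_pos.
  assert (HB : 4 + 4 * s <= B) by (unfold B; nra).
  assert (HAB : B <= A) by (unfold A, B; nra).
  assert (Hc : 0 < c < 2 * r) by (unfold c, r; lra).
  assert (Hsr : 0 < s < r) by (unfold r; lra).
  assert (Hr2 : 0 < r ^ 2) by nra.
  assert (HA' : p ^ 2 * (r ^ 2 - e ^ 2) = r ^ 2 * A + e ^ 2 * c) by (unfold r, c, A; ring).
  assert (HB' : p ^ 2 * (r ^ 2 - s ^ 2) = r ^ 2 * B + s ^ 2 * c) by (unfold r, c, B; ring).
  (* After squaring, [4 r^2 c (A s^2 + B e^2)] must be absorbed by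
     [5 r^4 A B + 18 r^2 e s c S]; these two estimates do it termwise. *)
  assert (Hsc : 4 * c * s ^ 2 <= 5 * r ^ 2 * B).
  { assert (8 * s ^ 2 <= 5 * r * B) by nra. nra. }
  assert (Hec : 4 * c * B * e ^ 2 < 18 * e * s * c * S).
  { assert (0 < c * B * e) by (apply Rmult_lt_0_compat; nra).
    assert (0 < e * s * c) by (apply Rmult_lt_0_compat; nra).
    nra. }
  assert (Hsq : (2 * p ^ 2 * U) ^ 2 < (3 * r ^ 2 * S + 3 * e * s * c) ^ 2).
  { replace ((2 * p ^ 2 * U) ^ 2)
      with (4 * (p ^ 2 * (r ^ 2 - e ^ 2)) * (p ^ 2 * (r ^ 2 - s ^ 2)))
      by (transitivity (4 * p ^ 4 * U ^ 2); [rewrite HU | ]; ring).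
    rewrite HA', HB'.
    replace ((3 * r ^ 2 * S + 3 * e * s * c) ^ 2)
      with (9 * r ^ 4 * S ^ 2 + 18 * r ^ 2 * (e * s * c * S) + 9 * e ^ 2 * s ^ 2 * c ^ 2)
      by ring.
    rewrite HS.
    assert (r ^ 2 * (4 * c * B * e ^ 2) < r ^ 2 * (18 * e * s * c * S))
      by (apply Rmult_lt_compat_l; lra).
    assert (r ^ 2 * A * (4 * c * s ^ 2) <= r ^ 2 * A * (5 * r ^ 2 * B))
      by (apply Rmult_le_compat_l; [apply Rmult_le_pos|]; lra).
    assert (0 < e ^ 2 * s ^ 2 * c ^ 2) by (repeat apply Rmult_lt_0_compat; nra).
    lra. }
  assert (0 <= r ^ 2 * S) by (apply Rmult_le_pos; lra).
  assert (0 <= e * s * c) by (repeat apply Rmult_le_pos; lra).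
  assert (0 <= 2 * p ^ 2 * U) by (apply Rmult_le_pos; nra).
  nra.
Qed.

Lemma gamma_minus_lt :
  (-1 * radical e s p - e * s) / p ^ 2
    < - (e / (p + 1)) * (s / (p + 1))
      - 2 / 3 * sqrt ((1 - (e / (p + 1)) ^ 2) * (1 - (s / (p + 1)) ^ 2)).
Proof.
  rewrite sqrt_one_sub_sqr_div_prod by lra.
  assert (Hd : 0 < 3 * p ^ 2 * (p + 1) ^ 2) by (repeat apply Rmult_lt_0_compat; nra).
  assert (Hn := radical_succ_lt).
  match goal with |- ?lhs < ?rhs =>
    assert (Hdiff : rhs - lhs
      = (3 * (p + 1) ^ 2 * radical e s p + 3 * e * s * (2 * p + 1)
         - 2 * p ^ 2 * radical e s (p + 1)) / (3 * p ^ 2 * (p + 1) ^ 2))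
      by (field; lra) end.
  assert (0 < (3 * (p + 1) ^ 2 * radical e s p + 3 * e * s * (2 * p + 1)
               - 2 * p ^ 2 * radical e s (p + 1)) / (3 * p ^ 2 * (p + 1) ^ 2))
    by (apply Rdiv_lt_0_compat; lra).
  lra.
Qed.

Lemma lt_gamma_plus :
  - (e / (p + 1)) * (s / (p + 1)) < (1 * radical e s p - e * s) / p ^ 2.
Proof.
  assert (Hd : 0 < p ^ 2 * (p + 1) ^ 2) by (repeat apply Rmult_lt_0_compat; nra).
  assert (Hn := cross_lt_radical).
  assert (Hdiff : (1 * radical e s p - e * s) / p ^ 2 - - (e / (p + 1)) * (s / (p + 1))
    = ((p + 1) ^ 2 * radical e s p - e * s * (2 * p + 1)) / (p ^ 2 * (p + 1) ^ 2))
    by (field; lra).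
  assert (0 < ((p + 1) ^ 2 * radical e s p - e * s * (2 * p + 1)) / (p ^ 2 * (p + 1) ^ 2))
    by (apply Rdiv_lt_0_compat; lra).
  lra.
Qed.

End Radical.

Theorem lemma9 (k : nat) (a b : R) :
  (1 <= k)%nat -> 0 < b -> b < a ->
  forall x : R,
    - q_ k a b * s_ k a b
      - (2 / 3) * sqrt ((1 - (q_ k a b)^2) * (1 - (s_ k a b)^2)) <= x ->
    x <= - q_ k a b * s_ k a b ->
    gamma_ (-1) k a b < x /\ x < gamma_ 1 k a b.
Proof.
  intros Hk Hb Hab x Hlo Hhi.
  assert (HkR : 1 <= INR k) by (apply (le_INR 1) in Hk; exact Hk).
  assert (He : 0 < eta_ a b) by (unfold eta_; lra).
  assert (Hes : eta_ a b < sigma_ a b) by (unfold eta_, sigma_; lra).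
  assert (Hp : sigma_ a b + 2 <= rho_ k a b) by (unfold sigma_, rho_, r_; lra).
  assert (Hr : r_ k a b = rho_ k a b + 1) by (unfold rho_; ring).
  unfold q_, s_ in *; rewrite Hr in *.
  change (gamma_ ?j k a b) with
    ((j * radical (eta_ a b) (sigma_ a b) (rho_ k a b) - eta_ a b * sigma_ a b)
       / rho_ k a b ^ 2).
  split.
  - apply Rlt_le_trans with (2 := Hlo); apply gamma_minus_lt; assumption.
  - apply Rle_lt_trans with (1 := Hhi); apply lt_gamma_plus; assumption.
Qed.
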